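(* Run the main loop of $c$-Adaptive ShiversSort on a sequence of positive run lengths $q_1,\dots,q_\rho$ with $\sum_i q_i=n$. Let $m$ be the total length of all merged runs created during the main loop. Then $\sum (r_1+r_2)\le 2(n+m)$, where the sum is over all failed checks and $r_1,r_2$ are the lengths of the top two stack entries at the time of that check. In particular, $\sum 2\max\{r_1,r_2\}\le 4(n+m)$ over the same failed checks.
   Context: Fix $c>0$. The main loop of $c$-Adaptive ShiversSort maintains a stack $S$ of run lengths. The top entry is called $R_1$ with length $r_1$, the next $R_2$ with length $r_2$, and so on. For $t=1,\dots,\rho$ it does the following. It pushes a new run of length $q_t$. Then, while $|S|\ge3$ and $\ell_3\le\max\{\ell_1,\ell_2\}$, where $\ell_i=\lfloor\log_2(r_i/c)\rfloor$, it replaces $R_3$ and $R_2$ by a single new run of length $r_3+r_2$, occupying the second position. Each such newly created run is a merged run. A failed check is an evaluation of the while-condition with $|S|\ge3$ that evaluates to false. *)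

From Stdlib Require Import Reals ZArith Arith List Lia.
Import ListNotations.
Open Scope R_scope.

(* ℓ(r) = floor(log2(r / c)); Int_part x = up x - 1 is the floor of x. *)
Definition level (c : R) (r : nat) : Z := Int_part (ln (INR r / c) / ln 2).

(* The stack is a list with its top (R_1) first.
   Returns (final stack, lengths of merged runs created (in order),
            list of failed checks as pairs (r_1, r_2)).
   The fuel is always taken >= size of the stack, which suffices since every
   merge shrinks the stack by one, so fuel never runs out before the loop
   terminates. *)
Fixpoint merge_loop (c : R) (fuel : nat) (St : list nat)
  : list nat * list nat * list (nat * nat) :=
  match fuel with
  | O => (St, [], [])
  | S fuel' =>
    match St with
    | r1 :: r2 :: r3 :: T =>
      if (level c r3 <=? Z.max (level c r1) (level c r2))%Z then
        let '(St', ms, fs) := merge_loop c fuel' (r1 :: (r3 + r2)%nat :: T) in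
        (St', (r3 + r2)%nat :: ms, fs)
      else (St, [], [(r1, r2)])
    | _ => (St, [], [])
    end
  end.

Fixpoint main_loop (c : R) (St : list nat) (qs : list nat)
  : list nat * list nat * list (nat * nat) :=
  match qs with
  | [] => (St, [], [])
  | q :: qs' =>
    let '(St1, ms1, fs1) := merge_loop c (S (length St)) (q :: St) in
    let '(St2, ms2, fs2) := main_loop c St1 qs' in
    (St2, ms1 ++ ms2, fs1 ++ fs2)
  end.

Definition merged_runs (c : R) (qs : list nat) : list nat :=
  snd (fst (main_loop c [] qs)).

Definition failed_checks (c : R) (qs : list nat) : list (nat * nat) :=
  snd (main_loop c [] qs).

(* Each push of a run q_t is followed by at most one failed check.  The top
   entry R_1 is q_t itself, since merges never touch the top, and R_2 is either
   the previous top q_(t-1) or the merged run created last in that round.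
   Hence the r_1 summed over all failed checks add up to at most n, and the r_2
   to at most n + m. *)
From Stdlib Require Import Reals ZArith List Lia.
Import ListNotations.

Lemma list_sum_cons (x : nat) (l : list nat) :
  list_sum (x :: l) = (x + list_sum l)%nat.
Proof. reflexivity. Qed.

Definition sum_r1 (fs : list (nat * nat)) : nat := list_sum (map fst fs).
Definition sum_r2 (fs : list (nat * nat)) : nat := list_sum (map snd fs).

Lemma sum_r1_app (fs gs : list (nat * nat)) :
  sum_r1 (fs ++ gs) = (sum_r1 fs + sum_r1 gs)%nat.
Proof. unfold sum_r1; now rewrite map_app, list_sum_app. Qed.

Lemma sum_r2_app (fs gs : list (nat * nat)) :
  sum_r2 (fs ++ gs) = (sum_r2 fs + sum_r2 gs)%nat.
Proof. unfold sum_r2; now rewrite map_app, list_sum_app. Qed.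

Lemma merge_loop_bounds (c : R) (fuel : nat) (St St' : list nat)
    (ms : list nat) (fs : list (nat * nat)) :
  merge_loop c fuel St = (St', ms, fs) ->
  hd 0%nat St' = hd 0%nat St /\
  (sum_r1 fs <= hd 0%nat St)%nat /\
  (sum_r2 fs <= hd 0%nat (tl St) + list_sum ms)%nat.
Proof.
  revert St St' ms fs; induction fuel as [|fuel IH]; intros St St' ms fs Hloop;
    cbn [merge_loop] in Hloop.
  - injection Hloop as <- <- <-; cbn; lia.
  - destruct St as [|r1 [|r2 [|r3 T]]];
      try (injection Hloop as <- <- <-; cbn; lia).
    destruct (level c r3 <=? Z.max (level c r1) (level c r2))%Z.
    + destruct (merge_loop c fuel (r1 :: (r3 + r2)%nat :: T))
        as [[St'' ms''] fs''] eqn:Hrec.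
      injection Hloop as <- <- <-.
      destruct (IH _ _ _ _ Hrec) as (Htop & Hr1 & Hr2).
      cbn [hd tl] in *; rewrite ?list_sum_cons in *; lia.
    + injection Hloop as <- <- <-; unfold sum_r1, sum_r2; cbn; lia.
Qed.

Lemma main_loop_bounds (c : R) (qs St St' ms : list nat) (fs : list (nat * nat)) :
  main_loop c St qs = (St', ms, fs) ->
  (sum_r1 fs <= list_sum qs)%nat /\
  (sum_r2 fs <= hd 0%nat St + list_sum qs + list_sum ms)%nat.
Proof.
  revert St St' ms fs; induction qs as [|q qs IH]; intros St St' ms fs Hloop;
    cbn [main_loop] in Hloop.
  - injection Hloop as <- <- <-; cbn; lia.
  - destruct (merge_loop c (S (length St)) (q :: St)) as [[St1 ms1] fs1] eqn:Hmerge.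
    destruct (main_loop c St1 qs) as [[St2 ms2] fs2] eqn:Hmain.
    injection Hloop as <- <- <-.
    destruct (merge_loop_bounds _ _ _ _ _ _ Hmerge) as (Htop & Hr1 & Hr2).
    destruct (IH _ _ _ _ Hmain) as [Hr1' Hr2'].
    rewrite sum_r1_app, sum_r2_app, list_sum_app, Htop in *.
    cbn [hd tl] in *; rewrite ?list_sum_cons in *; lia.
Qed.

Lemma sum_r1_add_r2 (fs : list (nat * nat)) :
  (list_sum (map (fun p => fst p + snd p) fs) = sum_r1 fs + sum_r2 fs)%nat.
Proof.
  unfold sum_r1, sum_r2; induction fs as [|[a b] fs IH]; [reflexivity |].
  cbn [map fst snd]; rewrite !list_sum_cons; lia.
Qed.

Lemma sum_double_max_le (fs : list (nat * nat)) :
  (list_sum (map (fun p => 2 * Nat.max (fst p) (snd p)) fs)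
     <= 2 * (sum_r1 fs + sum_r2 fs))%nat.
Proof.
  unfold sum_r1, sum_r2; induction fs as [|[a b] fs IH]; [reflexivity |].
  cbn [map fst snd]; rewrite !list_sum_cons; lia.
Qed.

Theorem mainTheorem9 (c : R) (qs : list nat) (n : nat) :
  (0 < c)%R ->
  Forall (fun q => (0 < q)%nat) qs ->
  list_sum qs = n ->
  let m := list_sum (merged_runs c qs) in
  (list_sum (map (fun p => fst p + snd p) (failed_checks c qs)) <= 2 * (n + m))%nat /\
  (list_sum (map (fun p => 2 * Nat.max (fst p) (snd p)) (failed_checks c qs))
     <= 4 * (n + m))%nat.
Proof.
  intros _ _ <- m; unfold m, merged_runs, failed_checks.
  destruct (main_loop c [] qs) as [[St ms] fs] eqn:Hmain; cbn [fst snd].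
  destruct (main_loop_bounds _ _ _ _ _ _ Hmain) as [Hr1 Hr2]; cbn [hd] in Hr2.
  pose proof (sum_double_max_le fs).
  rewrite sum_r1_add_r2; lia.
Qed.
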